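(* We have $\mathcal{P}(\mathrm{Cr}_2)=\mathcal{AM}(\mathrm{Cr}_2)$, and $\mathcal{P}(\mathrm{Cr}_n)\ne\mathcal{AM}(\mathrm{Cr}_n)$ for all $n>2$.
   Context: For $n\ge2$, the $n$-crown $\mathrm{Cr}_n$ is the poset $\{x_1,\dots,x_n,y_1,\dots,y_n\}$ whose only relations between distinct elements are $x_i<y_i$ ($1\le i\le n$), $x_{i+1}<y_i$ ($1\le i\le n-1$) and $x_1<y_n$. For a finite connected poset $X$ and $x<y$, $e_{xy}$ denotes the incidence-algebra basis element, and $B=\{e_{xy}:x<y\}$. $\mathcal{C}(X)$ is the set of maximal chains. For a bijection $\theta:B\to B$ and $C:u_1<\dots<u_m$ in $\mathcal{C}(X)$, $\theta$ is increasing on $C$ if there is $D:v_1<\dots<v_m$ in $\mathcal{C}(X)$ with $\theta(e_{u_iu_j})=e_{v_iv_j}$ for all $i<j$, decreasing if $\theta(e_{u_iu_j})=e_{v_{m-j+1}v_{m-i+1}}$ for all $i<j$. $\mathcal{M}(X)$: bijections $B\to B$ increasing or decreasing on every maximal chain. A walk is a sequence $u_0,\dots,u_m$ where for each $i$ one of $u_i,u_{i+1}$ covers the other; closed if $u_0=u_m$. For a closed walk $\Gamma:u_0,\dots,u_m=u_0$ and $z\in X$: $s^+_{\theta,\Gamma}(z)=|\{i: u_i<u_{i+1},\ \exists w>z,\ \theta(e_{zw})=e_{u_iu_{i+1}}\}|$, $s^-_{\theta,\Gamma}(z)=|\{i: u_i>u_{i+1},\ \exists w>z,\ \theta(e_{zw})=e_{u_{i+1}u_i}\}|$,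 $t^+_{\theta,\Gamma}(z)=|\{i: u_i<u_{i+1},\ \exists w<z,\ \theta(e_{wz})=e_{u_iu_{i+1}}\}|$, $t^-_{\theta,\Gamma}(z)=|\{i: u_i>u_{i+1},\ \exists w<z,\ \theta(e_{wz})=e_{u_{i+1}u_i}\}|$, $0\le i\le m-1$. $\theta$ is admissible if $s^+-s^-=t^+-t^-$ at every $z$ for every closed walk; $\mathcal{AM}(X)$ is the set of admissible elements of $\mathcal{M}(X)$. $\theta:B\to B$ is proper if there is an automorphism $\lambda$ of $X$ with $\theta(e_{xy})=e_{\lambda(x)\lambda(y)}$ for all $x<y$, or an anti-automorphism $\lambda$ with $\theta(e_{xy})=e_{\lambda(y)\lambda(x)}$ for all $x<y$; $\mathcal{P}(X)$ is the set of proper bijections. *)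

From HB Require Import structures.
From mathcomp Require Import all_boot perm ssralg ssrint.
Set Implicit Arguments. Unset Strict Implicit. Unset Printing Implicit Defensive.

Local Open Scope ring_scope.

(* The basis element e_xy is represented by the pair (x, y) with x < y. *)
Definition Bty (T : finType) (lt : rel T) := {p : T * T | lt p.1 p.2}.
HB.instance Definition _ (T : finType) (lt : rel T) := Finite.on (@Bty T lt).

Definition is_chain (T : finType) (lt : rel T) (s : seq T) : bool :=
  pairwise lt s.

Definition maximal_chain (T : finType) (lt : rel T) (s : seq T) : Prop :=
  is_chain lt s /\
  forall s' : seq T, is_chain lt s' -> {subset s <= s'} -> {subset s' <= s}.

(* Indices are 0-based here; the default element of nth is irrelevant
   since all indices are in range. *)
Definition increasing_on (T : finType) (lt : rel T) (theta : {perm Bty lt})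
    (C : seq T) : Prop :=
  exists D : seq T, maximal_chain lt D /\ size D = size C /\
    forall (b : Bty lt) (i j : nat), (i < j < size C)%N ->
      val b = (nth (val b).1 C i, nth (val b).1 C j) ->
      val (theta b) = (nth (val b).1 D i, nth (val b).1 D j).

(* theta is decreasing on C: theta(e_{u_i u_j}) = e_{v_{m-j+1} v_{m-i+1}}
   (1-based), i.e. with 0-based indices e_{v_{m-1-j} v_{m-1-i}}. *)
Definition decreasing_on (T : finType) (lt : rel T) (theta : {perm Bty lt})
    (C : seq T) : Prop :=
  exists D : seq T, maximal_chain lt D /\ size D = size C /\
    forall (b : Bty lt) (i j : nat), (i < j < size C)%N ->
      val b = (nth (val b).1 C i, nth (val b).1 C j) ->
      val (theta b) = (nth (val b).1 D (size C - 1 - j)%N,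
                       nth (val b).1 D (size C - 1 - i)%N).

Definition in_M (T : finType) (lt : rel T) (theta : {perm Bty lt}) : Prop :=
  forall C : seq T, maximal_chain lt C ->
    increasing_on theta C \/ decreasing_on theta C.

Definition covers (T : finType) (lt : rel T) (x y : T) : bool :=
  lt x y && [forall z, ~~ (lt x z && lt z y)].

(* A closed walk u_0, u_1, ..., u_m = u_0 is given by u_0 and the list
   [u_1; ...; u_m]. *)
Definition closed_walk (T : finType) (lt : rel T) (u0 : T) (s : seq T) : bool :=
  path (fun a b => covers lt a b || covers lt b a) u0 s && (last u0 s == u0).

Definition wpt (T : finType) (u0 : T) (s : seq T) (i : nat) : T :=
  nth u0 (u0 :: s) i.

Definition s_plus (T : finType) (lt : rel T) (theta : {perm Bty lt})
    (u0 : T) (s : seq T) (z : T) : nat :=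
  #|[pred i : 'I_(size s) | lt (wpt u0 s i) (wpt u0 s i.+1) &&
      [exists b : Bty lt, ((val b).1 == z) &&
                          (val (theta b) == (wpt u0 s i, wpt u0 s i.+1))]]|.

Definition s_minus (T : finType) (lt : rel T) (theta : {perm Bty lt})
    (u0 : T) (s : seq T) (z : T) : nat :=
  #|[pred i : 'I_(size s) | lt (wpt u0 s i.+1) (wpt u0 s i) &&
      [exists b : Bty lt, ((val b).1 == z) &&
                          (val (theta b) == (wpt u0 s i.+1, wpt u0 s i))]]|.

Definition t_plus (T : finType) (lt : rel T) (theta : {perm Bty lt})
    (u0 : T) (s : seq T) (z : T) : nat :=
  #|[pred i : 'I_(size s) | lt (wpt u0 s i) (wpt u0 s i.+1) &&
      [exists b : Bty lt, ((val b).2 == z) &&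
                          (val (theta b) == (wpt u0 s i, wpt u0 s i.+1))]]|.

Definition t_minus (T : finType) (lt : rel T) (theta : {perm Bty lt})
    (u0 : T) (s : seq T) (z : T) : nat :=
  #|[pred i : 'I_(size s) | lt (wpt u0 s i.+1) (wpt u0 s i) &&
      [exists b : Bty lt, ((val b).2 == z) &&
                          (val (theta b) == (wpt u0 s i.+1, wpt u0 s i))]]|.

Definition admissible (T : finType) (lt : rel T) (theta : {perm Bty lt}) : Prop :=
  forall (u0 : T) (s : seq T), closed_walk lt u0 s -> forall z : T,
    (s_plus theta u0 s z)%:Z - (s_minus theta u0 s z)%:Z =
    (t_plus theta u0 s z)%:Z - (t_minus theta u0 s z)%:Z.

Definition in_AM (T : finType) (lt : rel T) (theta : {perm Bty lt}) : Prop :=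
  in_M theta /\ admissible theta.

Definition automorphism (T : finType) (lt : rel T) (l : {perm T}) : Prop :=
  forall x y : T, lt x y = lt (l x) (l y).

Definition anti_automorphism (T : finType) (lt : rel T) (l : {perm T}) : Prop :=
  forall x y : T, lt x y = lt (l y) (l x).

Definition proper_bij (T : finType) (lt : rel T) (theta : {perm Bty lt}) : Prop :=
  (exists l : {perm T}, automorphism lt l /\
     forall b : Bty lt, val (theta b) = (l (val b).1, l (val b).2)) \/
  (exists l : {perm T}, anti_automorphism lt l /\
     forall b : Bty lt, val (theta b) = (l (val b).2, l (val b).1)).

(* Elements: x_i = inl i, y_i = inr i, for i in 'I_n (0-based indices
   0..n-1 corresponding to 1..n). *)
Definition crown_T (n : nat) : finType := ('I_n + 'I_n)%type.

Definition crown_lt (n : nat) : rel (crown_T n) :=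
  fun a b => match a, b with
  | inl j, inr i => (val j == val i) || (val j == (val i).+1 %% n)%N
  | _, _ => false
  end.

(* In a poset without 3-element chains, such as a crown, a maximal chain has at most
   two points, so every bijection of B lies in M. Admissibility holds as soon as, for
   every z, the edge indicators "theta^-1(e_ab) has source z" and "theta^-1(e_ab) has
   target z" are gradients f b - f a, because gradients sum to zero along closed walks.
   For a proper theta these indicators are [a = w] or [b = w], which are gradients.
   In Cr_n the indicator of e_{x0 y0} minus that of e_{x1 y1} is the gradient of
   [v = y0] + [v = x1], so the transposition of these two edges is admissible too; for
   n > 2 it fixes e_{x0 y(n-1)}, which shares x0 with the moved edge e_{x0 y0}, and no
   (anti-)automorphism can do that. For n = 2, admissibility along the square
   x0 y0 x1 y1 x0 says that the sources (and the targets) of theta^-1(e_{xj yk}) agree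
   as multisets on the two diagonals of the 2x2 grid of edges; with injectivity this
   makes theta^-1 a product or a swapped product map on the grid, i.e. it is induced by
   an automorphism or an anti-automorphism. *)

From mathcomp Require Import all_boot perm ssralg ssrint zify.
Import GRing.Theory.
Set Implicit Arguments. Unset Strict Implicit. Unset Printing Implicit Defensive.

Local Open Scope ring_scope.

Definition is_gradient (T : finType) (lt : rel T) (w : T -> T -> int) : Prop :=
  exists f : T -> int, forall a b, lt a b -> w a b = f b - f a.

Section Gradients.

Variables (T : finType) (lt : rel T).

Lemma eq_is_gradient (w1 w2 : T -> T -> int) :
  (forall a b, lt a b -> w1 a b = w2 a b) -> is_gradient lt w1 -> is_gradient lt w2.
Proof. by move=> w12 [f Hf]; exists f => a b ab; rewrite -w12 // Hf. Qed.

Lemma is_gradientD (w1 w2 : T -> T -> int) :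
  is_gradient lt w1 -> is_gradient lt w2 -> is_gradient lt (fun a b => w1 a b + w2 a b).
Proof.
move=> [f1 Hf1] [f2 Hf2]; exists (fun v => f1 v + f2 v) => a b ab.
by rewrite Hf1 // Hf2 // addrACA opprD.
Qed.

Lemma is_gradientMl (c : int) (w : T -> T -> int) :
  is_gradient lt w -> is_gradient lt (fun a b => c * w a b).
Proof. by move=> [f Hf]; exists (fun v => c * f v) => a b ab; rewrite Hf // mulrBr. Qed.

End Gradients.

Definition src_hit (T : finType) (lt : rel T) (theta : {perm Bty lt}) (z a b : T) :=
  [exists e : Bty lt, ((val e).1 == z) && (val (theta e) == (a, b))].

Definition tgt_hit (T : finType) (lt : rel T) (theta : {perm Bty lt}) (z a b : T) :=
  [exists e : Bty lt, ((val e).2 == z) && (val (theta e) == (a, b))].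

Section EdgeBijections.

Variables (T : finType) (lt : rel T).
Implicit Type theta : {perm Bty lt}.

Lemma src_hitE theta z a b (ab : lt a b) :
  src_hit theta z a b = ((val ((theta^-1)%g (exist _ (a, b) ab))).1 == z).
Proof.
apply/existsP/idP => [[e /andP[/eqP <- /eqP theta_e]] | src_z].
  have <- : theta e = exist _ (a, b) ab by apply: val_inj.
  by rewrite permK.
by exists ((theta^-1)%g (exist _ (a, b) ab)); rewrite src_z permKV eqxx.
Qed.

Lemma tgt_hitE theta z a b (ab : lt a b) :
  tgt_hit theta z a b = ((val ((theta^-1)%g (exist _ (a, b) ab))).2 == z).
Proof.
apply/existsP/idP => [[e /andP[/eqP <- /eqP theta_e]] | tgt_z].
  have <- : theta e = exist _ (a, b) ab by apply: val_inj.
  by rewrite permK.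
by exists ((theta^-1)%g (exist _ (a, b) ab)); rewrite tgt_z permKV eqxx.
Qed.

Lemma proper_hit_endpoint theta z : proper_bij theta -> exists w,
  (forall a b, lt a b -> src_hit theta z a b = (a == w) /\ tgt_hit theta z a b = (b == w)) \/
  (forall a b, lt a b -> src_hit theta z a b = (b == w) /\ tgt_hit theta z a b = (a == w)).
Proof.
case=> [[l [_ theta_l]] | [l [_ theta_l]]]; exists (l z); [left | right] => a b ab;
  rewrite (src_hitE _ _ ab) (tgt_hitE _ _ ab);
  have := permKV theta (exist _ (a, b) ab); move: ((theta^-1)%g _) => d;
  by move/(congr1 val); rewrite theta_l => -[<- <-]; rewrite !(inj_eq perm_inj).
Qed.

Lemma proper_of_inv_auto theta (l : {perm T}) : automorphism lt l ->
  (forall e, val ((theta^-1)%g e) = (l (val e).1, l (val e).2)) -> proper_bij theta.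
Proof.
move=> l_auto theta_l; left; exists (l^-1)%g; split.
  by move=> x y; rewrite (l_auto ((l^-1)%g x)) !permKV.
move=> e; have := theta_l (theta e); rewrite permK => -> /=.
by rewrite !permK; case: (val (theta e)).
Qed.

Lemma proper_of_inv_anti theta (l : {perm T}) : anti_automorphism lt l ->
  (forall e, val ((theta^-1)%g e) = (l (val e).2, l (val e).1)) -> proper_bij theta.
Proof.
move=> l_anti theta_l; right; exists (l^-1)%g; split.
  by move=> x y; rewrite (l_anti ((l^-1)%g y)) !permKV.
move=> e; have := theta_l (theta e); rewrite permK => -> /=.
by rewrite !permK; case: (val (theta e)).
Qed.

Lemma fixed_edge_not_proper theta (e f : Bty lt) :
    theta f = f -> (val e).1 = (val f).1 ->
    (val (theta e)).1 != (val f).1 -> (val (theta e)).2 != (val f).2 ->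
  ~ proper_bij theta.
Proof.
move=> fixed_f same_src src_moved tgt_moved [[l [_ theta_l]] | [l [_ theta_l]]].
  by move: src_moved; rewrite -{1}fixed_f !theta_l same_src eqxx.
by move: tgt_moved; rewrite -{1}fixed_f !theta_l same_src eqxx.
Qed.

End EdgeBijections.

Lemma card_walk_steps (T : finType) (P : rel T) u0 s :
  #|[pred i : 'I_(size s) | P (wpt u0 s i) (wpt u0 s i.+1)]|
  = count (fun i => P (wpt u0 s i) (wpt u0 s i.+1)) (iota 0 (size s)).
Proof.
rewrite -val_enum_ord count_map enumT cardE /enum_mem size_filter.
exact: eq_count.
Qed.

Definition walk_flow (T : finType) (lt Q : rel T) (u0 : T) (s : seq T) : int :=
  (count (fun i => lt (wpt u0 s i) (wpt u0 s i.+1) && Q (wpt u0 s i) (wpt u0 s i.+1))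
     (iota 0 (size s)))%:Z
  - (count (fun i => lt (wpt u0 s i.+1) (wpt u0 s i) && Q (wpt u0 s i.+1) (wpt u0 s i))
     (iota 0 (size s)))%:Z.

Section Walks.

Variables (T : finType) (lt : rel T).

Lemma admissibleE (theta : {perm Bty lt}) :
  admissible theta <-> forall u0 s, closed_walk lt u0 s -> forall z,
    walk_flow lt (src_hit theta z) u0 s = walk_flow lt (tgt_hit theta z) u0 s.
Proof.
rewrite /admissible /s_plus /s_minus /t_plus /t_minus.
by split=> adm u0 s walk z; have := adm u0 s walk z;
  rewrite (card_walk_steps (fun a b => lt a b && src_hit theta z a b))
    (card_walk_steps (fun a b => lt b a && src_hit theta z b a))
    (card_walk_steps (fun a b => lt a b && tgt_hit theta z a b))
    (card_walk_steps (fun a b => lt b a && tgt_hit theta z b a)).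
Qed.

Hypothesis lt_asym : forall a b, lt a b -> ~~ lt b a.

Lemma walk_flow_gradient (Q : rel T) (f : T -> int) u0 s :
    (forall a b, lt a b -> (Q a b)%:Z = f b - f a) ->
    path (fun a b => covers lt a b || covers lt b a) u0 s ->
  walk_flow lt Q u0 s = f (last u0 s) - f u0.
Proof.
move=> Qf /(pathP u0) walk; rewrite /walk_flow.
have -> : last u0 s = wpt u0 s (size s) by rewrite /wpt (last_nth u0).
elim: {-2}(size s) (leqnn (size s)) => [|m IH] lt_m; first by rewrite !subrr.
have step : lt (wpt u0 s m) (wpt u0 s m.+1) || lt (wpt u0 s m.+1) (wpt u0 s m).
  by have /orP[] := walk m lt_m => /andP[-> _]; rewrite ?orbT.
rewrite -[in iota 0 m.+1]addn1 iotaD !count_cat /= !addn0 !add0n !PoszD.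
have := IH (ltnW lt_m).
case/orP: step => lt_step; rewrite lt_step (negbTE (lt_asym lt_step)) /=.
  by rewrite Qf //; lia.
by have := Qf _ _ lt_step; lia.
Qed.

Lemma admissible_of_gradients (theta : {perm Bty lt}) :
    (forall z, is_gradient lt (fun a b => (src_hit theta z a b)%:Z)) ->
    (forall z, is_gradient lt (fun a b => (tgt_hit theta z a b)%:Z)) ->
  admissible theta.
Proof.
move=> src_grad tgt_grad; apply/admissibleE => u0 s /andP[walk /eqP closed] z.
have [f Hf] := src_grad z; have [g Hg] := tgt_grad z.
by rewrite (walk_flow_gradient Hf walk) (walk_flow_gradient Hg walk) closed !subrr.
Qed.

End Walks.

Section HeightOne.

Variables (T : finType) (lt : rel T).
Hypothesis lt_no3chain : forall {a b} c, lt a b -> ~~ lt b c.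

Lemma chain_size_le2 (s : seq T) : is_chain lt s -> (size s <= 2)%N.
Proof.
case: s => [|a [|b [|c s]]] //=.
rewrite /is_chain /= => /andP[/andP[ab _] /andP[/andP[bc _] _]].
by have := lt_no3chain c ab; rewrite bc.
Qed.

Lemma edge_maximal_chain a b : lt a b -> maximal_chain lt [:: a; b].
Proof.
move=> ab; split; first by rewrite /is_chain /= ab.
move=> s /chain_size_le2 size_s sub_s x s_x.
have a_s := sub_s a (mem_head _ _).
have b_s : b \in s by apply: sub_s; rewrite !inE eqxx orbT.
have a_neq_b : a != b by apply/eqP => a_b; have := lt_no3chain b ab; rewrite -{1}a_b ab.
move: size_s a_s b_s s_x a_neq_b.
case: s {sub_s} => [|p [|q [|r s]]] //=; rewrite !inE.
  by move=> _ /eqP -> /eqP ->; rewrite eqxx.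
by move=> _ /orP[]/eqP -> /orP[]/eqP -> /orP[]/eqP ->; rewrite ?eqxx ?orbT.
Qed.

Lemma in_M_no3chain (theta : {perm Bty lt}) : in_M theta.
Proof.
move=> C C_max; left.
have := chain_size_le2 C_max.1.
case: C C_max => [|a [|b [|c C]]] // C_max _.
- by exists [::]; split=> //; split=> // e i j /= /andP[? ?]; exfalso; lia.
- by exists [:: a]; split=> //; split=> // e i j /= /andP[? ?]; exfalso; lia.
have ab : lt a b by case/andP: C_max.1 => /andP[].
pose e_ab : Bty lt := exist _ (a, b) ab.
exists [:: (val (theta e_ab)).1; (val (theta e_ab)).2]; split.
  exact/edge_maximal_chain/(valP (theta e_ab)).
split=> // e i j /= /andP[ij j2].
have [-> ->] : i = 0%N /\ j = 1%N by lia.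
move=> e_val; have -> : e = e_ab by apply: val_inj.
by case: (val (theta e_ab)).
Qed.

Lemma source_gradient w : is_gradient lt (fun a b => (a == w)%:Z).
Proof.
have [u uw | no_below] := pickP (fun u => lt u w).
  exists (fun=> 0) => a b ab; rewrite subrr.
  by case: eqP ab => // -> wb; have := lt_no3chain b uw; rewrite wb.
exists (fun v => - (v == w)%:Z) => a b ab.
have -> : (b == w) = false by apply/eqP => bw; have := no_below a; rewrite /= -bw ab.
by rewrite opprK add0r.
Qed.

Lemma target_gradient w : is_gradient lt (fun a b => (b == w)%:Z).
Proof.
have [u wu | no_above] := pickP (fun u => lt w u).
  exists (fun=> 0) => a b ab; rewrite subrr.
  by case: eqP ab => // -> aw; have := lt_no3chain u aw; rewrite wu.
exists (fun v => (v == w)%:Z) => a b ab.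
have -> : (a == w) = false by apply/eqP => aw; have := no_above b; rewrite /= -aw ab.
by rewrite subr0.
Qed.

Lemma covers_no3chain a b : covers lt a b = lt a b.
Proof.
rewrite /covers; case: (boolP (lt a b)) => //= _.
apply/forallP => z; case: (boolP (lt a z)) => //= az.
exact: lt_no3chain az.
Qed.

Let lt_asym a b (ab : lt a b) : ~~ lt b a := lt_no3chain a ab.

Lemma proper_admissible (theta : {perm Bty lt}) : proper_bij theta -> admissible theta.
Proof.
move=> theta_proper.
apply: (admissible_of_gradients lt_asym) => z;
  have [w [hit | hit]] := proper_hit_endpoint z theta_proper.
- by apply: eq_is_gradient (source_gradient w) => a b ab; rewrite (hit _ _ ab).1.
- by apply: eq_is_gradient (target_gradient w) => a b ab; rewrite (hit _ _ ab).1.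
- by apply: eq_is_gradient (target_gradient w) => a b ab; rewrite (hit _ _ ab).2.
- by apply: eq_is_gradient (source_gradient w) => a b ab; rewrite (hit _ _ ab).2.
Qed.

Lemma tperm_admissible (e e' : Bty lt) :
    is_gradient lt (fun a b => ((a, b) == val e)%:Z - ((a, b) == val e')%:Z) ->
  admissible (tperm e e').
Proof.
move=> grad_ee'.
have [<- | e'_neq_e] := eqVneq e' e.
  rewrite tperm1; apply: proper_admissible; left; exists 1%g.
  by split=> [x y | d]; rewrite !perm1 //; case: (val d).
have tpermE (p : T * T -> T) z (d : Bty lt) :
    (p (val (tperm e e' d)) == z)%:Z = (p (val d) == z)%:Z
      + ((val d == val e)%:Z - (val d == val e')%:Z)
        * ((p (val e') == z)%:Z - (p (val e) == z)%:Z).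
  have distinct : (val e' == val e) = false by rewrite val_eqE (negbTE e'_neq_e).
  case: tpermP => [-> | -> | /eqP/negbTE d_neq_e /eqP/negbTE d_neq_e'].
  - by rewrite eqxx [val e == _]eq_sym distinct /=; lia.
  - by rewrite eqxx distinct /=; lia.
  - by rewrite !val_eqE d_neq_e d_neq_e' /=; lia.
apply: (admissible_of_gradients lt_asym) => z.
  pose c := ((val e').1 == z)%:Z - ((val e).1 == z)%:Z.
  apply: eq_is_gradient (is_gradientD (source_gradient z) (is_gradientMl c grad_ee')) => a b ab.
  by rewrite (src_hitE _ _ ab) tpermV (tpermE fst) /= mulrC.
pose c := ((val e').2 == z)%:Z - ((val e).2 == z)%:Z.
apply: eq_is_gradient (is_gradientD (target_gradient z) (is_gradientMl c grad_ee')) => a b ab.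
by rewrite (tgt_hitE _ _ ab) tpermV (tpermE snd) /= mulrC.
Qed.

End HeightOne.

Definition ord_one {n} : 'I_n.+2 := Ordinal (isT : (1 < n.+2)%N).

Lemma pair_count_eq (A : eqType) (a b c d : A) :
    (forall z, (a == z) + (b == z) = (c == z) + (d == z))%N ->
  (a = c /\ b = d) \/ (a = d /\ b = c).
Proof.
move=> cnt; have [c_a | c_neq_a] := eqVneq c a.
  by subst c; left; split=> //; apply/esym/eqP; have := cnt b; rewrite eqxx; lia.
have d_a : d = a by apply/eqP; have := cnt a; rewrite eqxx (negbTE c_neq_a); lia.
by subst d; right; split=> //; apply/esym/eqP; have := cnt b; rewrite eqxx; lia.
Qed.

Lemma ord2P (j : 'I_2) : j = ord0 \/ j = ord_one.
Proof. by case: j => [[|[|//]] j2]; [left | right]; apply: val_inj. Qed.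

Lemma square_split (A B : eqType) (g : 'I_2 -> 'I_2 -> A * B) :
    (forall j k j' k', g j k = g j' k' -> j = j' /\ k = k') ->
    (forall z, ((g ord0 ord0).1 == z) + ((g ord_one ord_one).1 == z)
               = ((g ord_one ord0).1 == z) + ((g ord0 ord_one).1 == z))%N ->
    (forall z, ((g ord0 ord0).2 == z) + ((g ord_one ord_one).2 == z)
               = ((g ord_one ord0).2 == z) + ((g ord0 ord_one).2 == z))%N ->
  (exists u v, [/\ injective u, injective v & forall j k, g j k = (u j, v k)]) \/
  (exists u v, [/\ injective u, injective v & forall j k, g j k = (u k, v j)]).
Proof.
move=> g_inj /pair_count_eq fst_bal /pair_count_eq snd_bal.
have factors_inj (h : 'I_2 -> 'I_2 -> A * B) u v :
    (forall j k j' k', h j k = h j' k' -> j = j' /\ k = k') ->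
    (forall j k, h j k = (u j, v k)) -> injective u /\ injective v.
  move=> h_inj form; split=> [j j' | k k'] uv.
    by have /h_inj[] : h j ord0 = h j' ord0 by rewrite !form uv.
  by have /h_inj[] : h ord0 k = h ord0 k' by rewrite !form uv.
case: fst_bal snd_bal => -[g1_00 g1_11] [] [g2_00 g2_11].
- have /g_inj[] : g ord0 ord0 = g ord_one ord0.
    by rewrite [LHS]surjective_pairing g1_00 g2_00 -surjective_pairing.
  by [].
- right; exists (fun k => (g ord0 k).1), (fun j => (g j ord0).2).
  have form j k : g j k = ((g ord0 k).1, (g j ord0).2).
    by case: (ord2P j) => ->; case: (ord2P k) => ->;
      rewrite [LHS]surjective_pairing; congr (_, _); congruence.
  have g_inj_swap k j k' j' : g j k = g j' k' -> k = k' /\ j = j'.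
    by move=> /g_inj[-> ->].
  by have [] := factors_inj (fun k j => g j k) _ _ g_inj_swap (fun k j => form j k).
- left; exists (fun j => (g j ord0).1), (fun k => (g ord0 k).2).
  have form j k : g j k = ((g j ord0).1, (g ord0 k).2).
    by case: (ord2P j) => ->; case: (ord2P k) => ->;
      rewrite [LHS]surjective_pairing; congr (_, _); congruence.
  by have [] := factors_inj g _ _ g_inj form.
- have /g_inj[] : g ord0 ord0 = g ord0 ord_one.
    by rewrite [LHS]surjective_pairing g1_00 g2_00 -surjective_pairing.
  by [].
Qed.

Lemma crown_lt_no3chain {n} (a b c : crown_T n) : crown_lt a b -> ~~ crown_lt b c.
Proof. by case: a; case: b; case: c. Qed.

Lemma crown_ltE n (j k : 'I_n) :
  crown_lt (inl j) (inr k)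
  = [|| val j == val k, val j == (val k).+1 | (val j == 0%N) && ((val k).+1 == n)].
Proof.
rewrite /=; case: (eqVneq (val k).+1 n) => [kn | kn].
  by rewrite kn modnn (ltn_eqF (ltn_ord j)) andbT.
by rewrite modn_small ?andbF ?orbF // ltn_neqAle kn ltn_ord.
Qed.

Lemma crown_proper_in_AM n (theta : {perm Bty (@crown_lt n)}) :
  proper_bij theta -> in_AM theta.
Proof.
move=> theta_proper; have no3chain := @crown_lt_no3chain n.
by split; [exact: in_M_no3chain | exact: proper_admissible].
Qed.

Lemma crown_square_gradient n :
  is_gradient (@crown_lt n.+2) (fun a b =>
    ((a, b) == (inl ord0, inr ord0))%:Z - ((a, b) == (inl ord_one, inr ord_one))%:Z).
Proof.
exists (fun v => (v == inr ord0)%:Z + (v == inl ord_one)%:Z).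
case=> [j|j] [k|k] //; rewrite crown_ltE /= => jk.
rewrite !xpair_eqE !(inj_eq inl_inj) !(inj_eq inr_inj) -!val_eqE /=; lia.
Qed.

Definition edge_x0y0 n : Bty (@crown_lt n.+2) := exist _ (inl ord0, inr ord0) isT.
Definition edge_x1y1 n : Bty (@crown_lt n.+2) := exist _ (inl ord_one, inr ord_one) isT.

Lemma crown_swap_in_AM n : in_AM (tperm (edge_x0y0 n) (edge_x1y1 n)).
Proof.
have no3chain := @crown_lt_no3chain n.+2.
split; first exact: in_M_no3chain.
exact/tperm_admissible/crown_square_gradient.
Qed.

Lemma crown_swap_not_proper n : ~ proper_bij (tperm (edge_x0y0 n.+1) (edge_x1y1 n.+1)).
Proof.
have x0_below_ylast : crown_lt (inl ord0 : crown_T n.+3) (inr ord_max).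
  by rewrite crown_ltE /=.
apply: (fixed_edge_not_proper (e := edge_x0y0 n.+1)
  (f := exist _ (inl ord0, inr ord_max) x0_below_ylast)) => //.
  by rewrite tpermD // -val_eqE /= xpair_eqE andbC.
all: by rewrite tpermL.
Qed.

Lemma crown2_lt (j k : 'I_2) : crown_lt (inl j) (inr k).
Proof. by case: (ord2P j) => ->; case: (ord2P k) => ->. Qed.

Definition edge2 (j k : 'I_2) : Bty (@crown_lt 2) := exist _ (inl j, inr k) (crown2_lt j k).

Lemma edge2P (e : Bty (@crown_lt 2)) : exists j k, e = edge2 j k.
Proof. by case: e => -[[j|j] [k|k]] // jk; exists j, k; apply: val_inj. Qed.

Definition crown2_map (u v : 'I_2 -> crown_T 2) (x : crown_T 2) : crown_T 2 :=
  match x with inl j => u j | inr k => v k end.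

Lemma crown2_map_inj (u v : 'I_2 -> crown_T 2) :
  injective u -> injective v -> (forall j k, u j != v k) -> injective (crown2_map u v).
Proof.
move=> u_inj v_inj u_neq_v [j|k] [j'|k'] //= eq_uv;
  rewrite ?(u_inj _ _ eq_uv) ?(v_inj _ _ eq_uv) //.
- by have := u_neq_v j k'; rewrite eq_uv eqxx.
- by have := u_neq_v j' k; rewrite eq_uv eqxx.
Qed.

Section Crown2Maps.

Variables u v : 'I_2 -> crown_T 2.
Hypotheses (u_inj : injective u) (v_inj : injective v).
Hypothesis uv_lt : forall j k, crown_lt (u j) (v k).

Let not_lt_to_u x j : ~~ crown_lt x (u j).
Proof. by apply/negP => xu; have := crown_lt_no3chain (v ord0) xu; rewrite uv_lt. Qed.

Let not_lt_from_v k y : ~~ crown_lt (v k) y.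
Proof. exact: crown_lt_no3chain (uv_lt ord0 k). Qed.

Let u_neq_v j k : u j != v k.
Proof. by apply/eqP => ujk; have := not_lt_to_u (u ord0) j; rewrite ujk uv_lt. Qed.

Let v_neq_u j k : v j != u k.
Proof. by rewrite eq_sym. Qed.

Lemma crown2_map_automorphism :
  automorphism (@crown_lt 2) (perm (crown2_map_inj u_inj v_inj u_neq_v)).
Proof.
move=> x y; rewrite !permE.
by case: x y => [j|k] [j'|k']; rewrite ?crown2_lt /= ?uv_lt ?(negbTE (not_lt_to_u _ _))
  ?(negbTE (not_lt_from_v _ _)).
Qed.

Lemma crown2_map_anti_automorphism :
  anti_automorphism (@crown_lt 2) (perm (crown2_map_inj v_inj u_inj v_neq_u)).
Proof.
move=> x y; rewrite !permE.
by case: x y => [j|k] [j'|k']; rewrite ?crown2_lt /= ?uv_lt ?(negbTE (not_lt_to_u _ _))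
  ?(negbTE (not_lt_from_v _ _)).
Qed.

End Crown2Maps.

Lemma crown2_square_balance (theta : {perm Bty (@crown_lt 2)})
    (g := fun j k => val ((theta^-1)%g (edge2 j k))) :
  admissible theta ->
  (forall z, ((g ord0 ord0).1 == z) + ((g ord_one ord_one).1 == z)
             = ((g ord_one ord0).1 == z) + ((g ord0 ord_one).1 == z))%N /\
  (forall z, ((g ord0 ord0).2 == z) + ((g ord_one ord_one).2 == z)
             = ((g ord_one ord0).2 == z) + ((g ord0 ord_one).2 == z))%N.
Proof.
have no3chain := @crown_lt_no3chain 2.
move=> /admissibleE adm.
have square :
    closed_walk (@crown_lt 2) (inl ord0) [:: inr ord0; inl ord_one; inr ord_one; inl ord0].
  by rewrite /closed_walk /= !covers_no3chain.
have src_g j k z : src_hit theta z (inl j) (inr k) = ((g j k).1 == z) := src_hitE _ _ _.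
have tgt_g j k z : tgt_hit theta z (inl j) (inr k) = ((g j k).2 == z) := tgt_hitE _ _ _.
have g_lt j k : crown_lt (g j k).1 (g j k).2 := valP ((theta^-1)%g (edge2 j k)).
(* No point is both a source and a target, so one side of each admissibility
   equation vanishes. *)
suff separate z : (forall j k, (g j k).1 != z) \/ (forall j k, (g j k).2 != z).
  by split=> z; have := adm _ _ square z; rewrite /walk_flow /= !src_g !tgt_g;
    case: (separate z) => free; rewrite ?(negbTE (free _ _)) /=; lia.
have [/existsP[j /existsP[k /eqP src_z]] | /existsPn none] :=
  boolP [exists j, exists k, (g j k).1 == z].
  right=> j' k'; apply/eqP => tgt_z.
  by have := no3chain _ _ (g j k).2 (g_lt j' k'); rewrite tgt_z -src_z g_lt.
by left=> j k; have /existsPn := none j.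
Qed.

Lemma crown2_admissible_proper (theta : {perm Bty (@crown_lt 2)}) :
  admissible theta -> proper_bij theta.
Proof.
move=> /crown2_square_balance [fst_bal snd_bal].
pose g j k := val ((theta^-1)%g (edge2 j k)).
have g_inj j k j' k' : g j k = g j' k' -> j = j' /\ k = k'.
  by move/val_inj/perm_inj/(congr1 val) => -[-> ->].
have g_lt j k : crown_lt (g j k).1 (g j k).2 := valP ((theta^-1)%g (edge2 j k)).
have [[u [v [u_inj v_inj g_uv]]] | [u [v [u_inj v_inj g_vu]]]] :=
  square_split g_inj fst_bal snd_bal.
- have uv_lt j k : crown_lt (u j) (v k) by have := g_lt j k; rewrite g_uv.
  apply: (proper_of_inv_auto (crown2_map_automorphism u_inj v_inj uv_lt)) => e.
  by have [j [k ->]] := edge2P e; rewrite !(permE (crown2_map_inj _ _ _)); exact: g_uv.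
have uv_lt j k : crown_lt (u j) (v k) by have := g_lt k j; rewrite g_vu.
apply: (proper_of_inv_anti (crown2_map_anti_automorphism u_inj v_inj uv_lt)) => e.
by have [j [k ->]] := edge2P e; rewrite !(permE (crown2_map_inj _ _ _)); exact: g_vu.
Qed.

Theorem corollary4p12 :
  (forall theta : {perm Bty (@crown_lt 2)},
      proper_bij theta <-> in_AM theta) /\
  (forall n : nat, (2 < n)%N ->
      ~ (forall theta : {perm Bty (@crown_lt n)},
            proper_bij theta <-> in_AM theta)).
Proof.
split=> [theta | [|[|[|m]]] // _ proper_iff_AM].
  split; first exact: crown_proper_in_AM.
  by case=> _; exact: crown2_admissible_proper.
exact/(crown_swap_not_proper (n := m))/proper_iff_AM/crown_swap_in_AM.
Qed.
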